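(* For every graph $G$ on $n$ vertices and every finite field $\mathbb{F}$ of size $q$, \[\mathrm{minrk}_{\mathbb{F}}(G)\le \overline{\xi}_l(\overline{G},\mathbb{F})+\lceil\log_q n\rceil.\] In particular, $\mathrm{minrk}_{\mathbb{F}_2}(G)\le \overline{\xi}_l(\overline{G},\mathbb{F}_2)+\lceil\log_2 n\rceil$.
   Context: $\overline{G}$ is the complement of $G$. For a graph $H$ on $[n]$, a matrix $M\in\mathbb{F}^{n\times n}$ represents $H$ if $M_{i,i}\ne0$ for all $i$ and $M_{i,j}=0$ for distinct non-adjacent $i,j$; $\mathrm{minrk}_{\mathbb{F}}(H)$ is the minimum rank over $\mathbb{F}$ of such a matrix. An orthogonal representation of $H=(V,E)$ over $\mathbb{F}$ assigns $u_v\in\mathbb{F}^t$ to each $v$ with $\langle u_v,u_v\rangle\ne0$ and $\langle u_v,u_{v'}\rangle=0$ for adjacent $v,v'$, where $\langle x,y\rangle=\sum_i x_iy_i$. Its locality is $\max_v\dim\mathrm{span}\{u_{v'}:v'\in\{v\}\cup N(v)\}$ with $N(v)$ the neighborhood of $v$; $\overline{\xi}_l(H,\mathbb{F})$ is the minimum locality of an orthogonal representation of $H$ over $\mathbb{F}$. *)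

From mathcomp Require Import all_boot all_order all_algebra all_field.
From Stdlib Require Import ClassicalEpsilon.
Set Implicit Arguments. Unset Strict Implicit. Unset Printing Implicit Defensive.
Import GRing.Theory.
Local Open Scope ring_scope.

Definition simple_graph (n : nat) (G : rel 'I_n) : Prop :=
  symmetric G /\ irreflexive G.

Definition compl_graph (n : nat) (G : rel 'I_n) : rel 'I_n :=
  fun i j => (i != j) && ~~ G i j.

Definition represents (F : fieldType) (n : nat) (H : rel 'I_n) (M : 'M[F]_n) : bool :=
  [forall i, M i i != 0] && [forall i, forall j, ((i != j) && ~~ H i j) ==> (M i j == 0)].

(* minrk_F(H): minimum rank of a matrix representing H (the identity represents H
   and has rank n, so n is a valid default for the min). *)
Definition minrk (F : finFieldType) (n : nat) (H : rel 'I_n) : nat :=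
  \big[minn/n]_(M : 'M[F]_n | represents H M) \rank M.

Definition bil (F : fieldType) (t : nat) (x y : 'rV[F]_t) : F :=
  \sum_(i < t) x 0 i * y 0 i.

Definition orth_rep (F : fieldType) (n t : nat) (H : rel 'I_n) (u : 'I_n -> 'rV[F]_t) : Prop :=
  (forall v, bil (u v) (u v) != 0) /\ (forall v v', v != v' -> H v v' -> bil (u v) (u v') = 0).

(* dim span {u_v' : v' in {v} ∪ N(v)} = rank of the matrix with these rows (others 0) *)
Definition local_dim (F : fieldType) (n t : nat) (H : rel 'I_n) (u : 'I_n -> 'rV[F]_t) (v : 'I_n) : nat :=
  \rank (\matrix_(i < n) (if (i == v) || H v i then u i else 0)).

Definition locality (F : fieldType) (n t : nat) (H : rel 'I_n) (u : 'I_n -> 'rV[F]_t) : nat :=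
  (\max_(v : 'I_n) local_dim H u v)%N.

Definition has_orth_rep_of_locality (F : fieldType) (n : nat) (H : rel 'I_n) (k : nat) : Prop :=
  exists t (u : 'I_n -> 'rV[F]_t), orth_rep H u /\ locality H u = k.

Definition orth_locb (F : fieldType) (n : nat) (H : rel 'I_n) (k : nat) : bool :=
  if excluded_middle_informative (has_orth_rep_of_locality F H k) then true else false.

Lemma exists_orth_rep (F : fieldType) (n : nat) (H : rel 'I_n) :
  exists k, orth_locb F H k.
Proof.
pose u := fun v : 'I_n => (delta_mx 0 v : 'rV[F]_n).
have bE : forall v w, bil (u v) (u w) = (v == w)%:R.
  move=> v w; rewrite /bil (bigD1 v) //= big1 => [|i /negbTE Hi].
    by rewrite !mxE !eqxx /= mul1r addr0 eq_sym.
  by rewrite !mxE Hi /= mul0r.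
exists (locality H u); rewrite /orth_locb.
case: excluded_middle_informative => // [[]]; exists n, u; split=> //; split.
  by move=> v; rewrite bE eqxx oner_neq0.
by move=> v v' /negbTE nv _; rewrite bE nv.
Qed.

Definition xi_l (F : fieldType) (n : nat) (H : rel 'I_n) : nat :=
  ex_minn (exists_orth_rep F H).

From mathcomp Require Import all_boot all_order all_algebra all_field.
From mathcomp Require Import zify.
From Stdlib Require Import ClassicalEpsilon.
Set Implicit Arguments. Unset Strict Implicit. Unset Printing Implicit Defensive.
Import GRing.Theory.
Local Open Scope ring_scope.

(* Take an orthogonal representation u of the complement of G in F^t whose local
   spans N_v = span {u_w : w = v or w adjacent to v} have dimension at most k.
   A random linear map P : F^t -> F^r kills a fixed nonzero vector with
   probability q^-r, and the N_v contain at most n (q^k - 1) nonzero vectors, so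
   for r = k + ceil(log_q n) some P is injective on every N_v.  For each v pick
   x_v in F^r with <y P, x_v> = <y, u_v> for all y in N_v; then the matrix
   M_vw = <u_w P, x_v> represents G (it agrees with the Gram matrix of u on every
   closed neighbourhood of the complement) and has rank at most r. *)

Lemma leq_card_bigcup (I T : finType) (P : pred I) (A : I -> {set T}) :
  (#|\bigcup_(i | P i) A i| <= \sum_(i | P i) #|A i|)%N.
Proof.
apply: (big_ind2 (fun (B : {set T}) m => #|B| <= m)%N) => [|B1 m1 B2 m2 le1 le2|//].
  by rewrite cards0.
exact: leq_trans (leq_card_setU B1 B2) (leq_add le1 le2).
Qed.

Section RandomProjection.

Variable F : finFieldType.
Local Notation q := #|F|.

Let q_gt0 : (0 < q)%N := ltnW (card_finNzRing_gt1 F).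

Lemma card_annihilating_mx t r (y : 'rV[F]_t) : y != 0 ->
  (#|[set P : 'M[F]_(t, r) | y *m P == 0%R]| * q ^ r <= q ^ (t * r))%N.
Proof.
case/rV0Pn=> j yj0.
pose E (z : 'rV[F]_r) : 'M[F]_(t, r) :=
  \matrix_(a, b) (if a == j then (y 0 j)^-1 * z 0 b else 0).
have yE z : y *m E z = z.
  apply/rowP=> b; rewrite !mxE (bigD1 j) //= big1 => [|a /negbTE ja].
    by rewrite mxE eqxx mulrA mulfV // mul1r addr0.
  by rewrite mxE ja mulr0.
have -> : (q ^ r = #|[set: 'rV[F]_r]|)%N by rewrite cardsT card_mx mul1n.
rewrite -cardsX -card_mx.
pose f (p : 'M[F]_(t, r) * 'rV[F]_r) := p.1 + E p.2.
rewrite -(card_in_imset (f := f)); first exact: max_card.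
move=> [P1 z1] [P2 z2]; rewrite !inE /= => /andP[/eqP y1 _] /andP[/eqP y2 _] eqf.
have ez : z1 = z2.
  by move: (congr1 (mulmx y) eqf); rewrite !mulmxDr y1 y2 !add0r !yE.
by move: eqf; rewrite /f /= ez => /addIr ->.
Qed.

Lemma exists_mx_nonvanishing t r (Y : {set 'rV[F]_t}) :
  0 \notin Y -> (#|Y| < q ^ r)%N ->
  exists P : 'M[F]_(t, r), {in Y, forall y, y *m P != 0}.
Proof.
move=> Y0 ltYq.
pose Bad := \bigcup_(y in Y) [set P : 'M[F]_(t, r) | y *m P == 0].
have ltBad : (#|Bad| < #|'M[F]_(t, r)|)%N.
  have qe_gt0 e : (0 < q ^ e)%N by rewrite expn_gt0 q_gt0.
  rewrite card_mx -(ltn_pmul2r (qe_gt0 r)).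
  apply: leq_ltn_trans (_ : #|Y| * q ^ (t * r) < _)%N; last first.
    by rewrite mulnC ltn_pmul2l.
  rewrite (leq_trans (leq_mul (leq_card_bigcup _ _) (leqnn _))) //.
  rewrite big_distrl /= -sum_nat_const leq_sum // => y Yy.
  by apply: card_annihilating_mx; apply: contraNneq Y0 => <-.
have /set0Pn[P] : ~: Bad != set0.
  by rewrite -card_gt0 -(ltn_add2l #|Bad|) addn0 cardsC.
rewrite inE => /bigcupP notBad; exists P => y Yy.
by apply/negP=> yP0; apply: notBad; exists y; rewrite ?inE.
Qed.

Lemma exists_mx_row_free_mul (I : finType) t k r (d : I -> nat)
    (B : forall i, 'M[F]_(d i, t)) :
  (forall i, d i <= k)%N -> (#|I| * (q ^ k - 1) < q ^ r)%N ->
  exists P : 'M[F]_(t, r), forall i, row_free (B i) -> row_free (B i *m P).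
Proof.
move=> le_dk ltIq.
pose Y := \bigcup_i ([set c *m B i | c : 'rV[F]_(d i)] :\ 0).
have Y0 : 0 \notin Y by apply/bigcupP=> -[i _]; rewrite !inE eqxx.
have cardY : (#|Y| < q ^ r)%N.
  have cardYi i : (#|[set c *m B i | c : 'rV[F]_(d i)] :\ 0%R| <= q ^ k - 1)%N.
    set S := [set _ | _ : _].
    have S0 : 0 \in S by apply/imsetP; exists 0; rewrite ?inE ?mul0mx.
    have leS : (#|S| <= q ^ k)%N.
      by rewrite (leq_trans (leq_imset_card _ _)) // card_mx mul1n leq_pexp2l.
    move: leS; rewrite (cardsD1 0) S0 add1n subn1 => ltS.
    by rewrite -ltnS prednK ?expn_gt0 ?q_gt0.
  apply: leq_ltn_trans (leq_trans (leq_card_bigcup _ _) _) ltIq.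
  by rewrite -sum_nat_const leq_sum.
have [P PY] := exists_mx_nonvanishing Y0 cardY.
exists P => i freeB; apply/inj_row_free=> c /eqP; rewrite mulmxA; apply: contraTeq.
move=> c0; apply: PY; apply/bigcupP; exists i => //.
rewrite !inE -(mul0mx _ (B i)) (inj_eq (row_free_inj freeB)) c0.
by apply/imsetP; exists c.
Qed.

End RandomProjection.

Lemma mul_expn_pred_lt_up_log q n k : (1 < q)%N ->
  (n * (q ^ k - 1) < q ^ (k + up_log q n))%N.
Proof.
move=> q_gt1; have n_le := up_logP n q_gt1.
have qk_gt0 : (0 < q ^ k)%N by rewrite expn_gt0 ltnW.
rewrite expnD; nia.
Qed.

Lemma row_free_solvable (F : fieldType) m n (A : 'M[F]_(m, n)) (b : 'cV[F]_m) :
  row_free A -> exists x : 'cV[F]_n, A *m x = b.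
Proof.
move=> freeA; exists (b^T *m pinvmx A^T)^T.
apply: trmx_inj; rewrite trmx_mul trmxK mulmxKpV // submx_full //.
by rewrite /row_full mxrank_tr.
Qed.

Lemma bilE (F : fieldType) t (x y : 'rV[F]_t) : bil x y = (x *m y^T) 0 0.
Proof. by rewrite /bil mxE; apply: eq_bigr => i _; rewrite mxE. Qed.

Lemma bilC (F : fieldType) t (x y : 'rV[F]_t) : bil x y = bil y x.
Proof. by apply: eq_bigr => i _; rewrite mulrC. Qed.

Definition nbhd_mx (F : fieldType) n t (H : rel 'I_n) (u : 'I_n -> 'rV[F]_t)
    (v : 'I_n) : 'M[F]_(n, t) :=
  \matrix_(i < n) (if (i == v) || H v i then u i else 0).

Lemma nbhd_mx_sub (F : fieldType) n t (H : rel 'I_n) (u : 'I_n -> 'rV[F]_t) v w :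
  (w == v) || H v w -> (u w <= nbhd_mx H u v)%MS.
Proof.
move=> vw; have <- : row w (nbhd_mx H u v) = u w by apply/rowP=> j; rewrite !mxE vw.
exact: row_sub.
Qed.

Lemma compressed_representation (F : fieldType) n t r (G : rel 'I_n)
    (u : 'I_n -> 'rV[F]_t) (P : 'M[F]_(t, r)) :
  orth_rep (compl_graph G) u ->
  (forall v, row_free (row_base (nbhd_mx (compl_graph G) u v) *m P)) ->
  exists2 M : 'M[F]_n, represents G M & (\rank M <= r)%N.
Proof.
set H := compl_graph G => -[u_aniso u_orth] freeP.
pose B v := row_base (nbhd_mx H u v).
have /fin_all_exists[x xE] v : exists x : 'cV_r, B v *m P *m x = B v *m (u v)^T.
  exact: row_free_solvable.
have uPx v w : (w == v) || H v w -> (u w *m P *m x v) 0 0 = bil (u w) (u v).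
  move/(nbhd_mx_sub u); rewrite -(eq_row_base (nbhd_mx H u v)) => /submxP[D ->].
  move: (xE v); rewrite /B; move: (row_base _) => Bv xEv.
  by rewrite bilE -!mulmxA (mulmxA Bv) xEv.
pose X : 'M[F]_(n, r) := \matrix_(v, j) x v j 0.
pose Y : 'M[F]_(r, n) := \matrix_(j, w) (u w *m P) 0 j.
have XYE v w : (X *m Y) v w = (u w *m P *m x v) 0 0.
  by rewrite !mxE; apply: eq_bigr => j _; rewrite !mxE mulrC.
exists (X *m Y); last exact: mulmx_max_rank.
apply/andP; split; apply/forallP=> v.
  by rewrite XYE uPx ?eqxx.
apply/forallP=> w; apply/implyP=> Hvw; have [neq_vw _] := andP Hvw.
by rewrite XYE uPx; [rewrite bilC u_orth | rewrite [H v w]Hvw orbT].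
Qed.

Lemma bigminn_le_cond (I : finType) (P : pred I) (f : I -> nat) d i :
  P i -> (\big[minn/d]_(j | P j) f j <= f i)%N.
Proof.
move=> Pi; rewrite -big_filter.
have : i \in [seq j <- index_enum I | P j] by rewrite mem_filter Pi mem_index_enum.
elim: [seq j <- _ | _] => //= a s IHs; rewrite big_cons in_cons.
case/orP=> [/eqP ->|/IHs]; first exact: geq_minl.
exact: leq_trans (geq_minr _ _).
Qed.

Lemma minrk_le_rank (F : finFieldType) n (G : rel 'I_n) (M : 'M[F]_n) :
  represents G M -> (minrk F G <= \rank M)%N.
Proof. exact: bigminn_le_cond. Qed.

Lemma xi_lP (F : fieldType) n (H : rel 'I_n) :
  has_orth_rep_of_locality F H (xi_l F H).
Proof.
rewrite /xi_l; case: ex_minnP => k + _.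
by rewrite /orth_locb; case: excluded_middle_informative.
Qed.

Theorem mainTheorem13 (F : finFieldType) (n : nat) (G : rel 'I_n) :
  simple_graph G ->
  (minrk F G <= xi_l F (compl_graph G) + up_log #|F| n)%N.
Proof.
move=> _; set k := xi_l F _; set r := (k + _)%N.
have [t [u [u_rep u_loc]]] := xi_lP F (compl_graph G).
pose B v := row_base (nbhd_mx (compl_graph G) u v).
have [P freeBP] : exists P : 'M[F]_(t, r), forall v, row_free (B v) -> row_free (B v *m P).
  apply: (exists_mx_row_free_mul (k := k)).
    move=> v; rewrite /k -u_loc; exact: (leq_bigmax (F := local_dim _ u)).
  by rewrite card_ord mul_expn_pred_lt_up_log // card_finNzRing_gt1.
have [M repM rankM] := compressed_representation u_rep (fun v => freeBP v (row_base_free _)).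
exact: leq_trans (minrk_le_rank repM) rankM.
Qed.
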